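(* Let $T$ be a line trigraph that contains no odd prism, and let $H$ be a bipartite graph such that $L(H)$ is the full realization of $T$. Then $H$ has no (not necessarily induced) subgraph isomorphic to an even theta, and $H$ is series-parallel, i.e. $H$ has no $K_4$-minor.
   Context: A trigraph $T$ consists of a finite set $V(T)$ and a map $\theta:\binom{V(T)}{2}\to\{-1,0,1\}$; distinct $u,v$ are strongly adjacent if $\theta(uv)=1$, strongly antiadjacent if $\theta(uv)=-1$, semiadjacent if $\theta(uv)=0$, adjacent if $\theta(uv)\in\{0,1\}$, antiadjacent if $\theta(uv)\in\{0,-1\}$. The full realization of $T$ is the graph on $V(T)$ whose edges are the adjacent pairs. A clique (strong clique) is a set of pairwise adjacent (strongly adjacent) vertices. $T$ is a line trigraph if its full realization is the line graph of a bipartite graph and every clique of size at least $3$ in $T$ is a strong clique. A prism in $T$ is an induced subtrigraph whose full realization consists of two vertex-disjoint triangles $\{a_1,a_2,a_3\}$, $\{b_1,b_2,b_3\}$ and three vertex-disjoint induced paths $P_i$ from $a_i$ to $b_i$ ($i=1,2,3$) with no other edges; it is odd if all three $P_i$ have an odd number of edges. An even theta is a graph consisting of three internally vertex-disjoint paths with the same two endpoints, each having an even number of edges. *)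

From mathcomp Require Import all_boot.
Set Implicit Arguments. Unset Strict Implicit. Unset Printing Implicit Defensive.

(* theta value: 1 (strong), 0 (semi), -1 (strong anti) *)
Inductive trival := TPlus | TZero | TMinus.

Definition trival_eqb (a b : trival) : bool :=
  match a, b with
  | TPlus, TPlus | TZero, TZero | TMinus, TMinus => true | _, _ => false end.

(* A trigraph on a finite vertex type V is a map theta on ordered pairs that
   is symmetric; its values on the diagonal are irrelevant. *)
Definition is_trigraph (V : finType) (th : V -> V -> trival) : Prop :=
  forall u v, th u v = th v u.

Definition tadj (V : finType) (th : V -> V -> trival) (u v : V) : bool :=
  (u != v) && ~~ trival_eqb (th u v) TMinus.

Definition tstrong (V : finType) (th : V -> V -> trival) (u v : V) : bool :=
  (u != v) && trival_eqb (th u v) TPlus.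

Definition full_realization (V : finType) (th : V -> V -> trival) : rel V :=
  fun u v => tadj th u v.

Definition is_clique (V : finType) (th : V -> V -> trival) (K : {set V}) : Prop :=
  forall u v, u \in K -> v \in K -> u != v -> tadj th u v.

Definition is_strong_clique (V : finType) (th : V -> V -> trival) (K : {set V}) : Prop :=
  forall u v, u \in K -> v \in K -> u != v -> tstrong th u v.

Definition simple_graph (W : finType) (e : rel W) : Prop :=
  symmetric e /\ irreflexive e.

Definition bipartite (W : finType) (e : rel W) : Prop :=
  exists c : W -> bool, forall a b, e a b -> c a != c b.

Definition edge_set (W : finType) (e : rel W) : {set {set W}} :=
  [set X : {set W} | [exists a, exists b, e a b && (X == [set a; b])]].

(* The graph G on V is (isomorphic to) the line graph L(H) of H = (W, e):
   a bijection f from V onto the edge set of H such that distinct vertices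
   of V are adjacent in G iff the corresponding edges of H share an end. *)
Definition is_line_graph_of (V W : finType) (G : rel V) (e : rel W) : Prop :=
  exists f : V -> {set W},
    [/\ injective f,
        (forall v, f v \in edge_set e),
        (forall X, X \in edge_set e -> exists v, f v = X) &
        (forall u v, u != v -> (G u v <-> f u :&: f v != set0))].

Definition line_trigraph (V : finType) (th : V -> V -> trival) : Prop :=
  (exists (W : finType) (e : rel W),
      simple_graph e /\ bipartite e /\ is_line_graph_of (full_realization th) e)
  /\ (forall K : {set V}, 3 <= #|K| -> is_clique th K -> is_strong_clique th K).

Definition consec (V : eqType) (s : seq V) (x y : V) : Prop :=
  exists k, k.+1 < size s /\
    ((nth x s k = x /\ nth x s k.+1 = y) \/ (nth x s k = y /\ nth x s k.+1 = x)).

(* An odd prism in T: paths P_i = a_i :: q_i (i < 3) from a_i to b_i = last,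
   each with an odd number of edges (size q_i), pairwise vertex-disjoint,
   and the full realization of T restricted to their union has exactly the
   edges of the three paths and of the triangles {a_1,a_2,a_3},
   {b_1,b_2,b_3}. *)
Definition has_odd_prism (V : finType) (th : V -> V -> trival) : Prop :=
  exists (a : 'I_3 -> V) (q : 'I_3 -> seq V),
    let P i := a i :: q i in
    let b i := last (a i) (q i) in
    [/\ (forall i, uniq (P i)),
        (forall i, odd (size (q i))),
        (forall i j x, i != j -> x \in P i -> x \notin P j) &
        (forall x y i j, x \in P i -> y \in P j -> x != y ->
           (tadj th x y <->
              (exists k, consec (P k) x y)
              \/ (exists k l, x = a k /\ y = a l)
              \/ (exists k l, x = b k /\ y = b l)))].

(* three paths a :: s_i from a to b (b <> a), internally vertex-disjoint,
   each with an even number of edges (size s_i). *)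
Definition has_even_theta_subgraph (W : finType) (e : rel W) : Prop :=
  exists (a b : W) (s : 'I_3 -> seq W),
    [/\ a != b,
        (forall i, path e a (s i) /\ last a (s i) = b /\ uniq (a :: s i)),
        (forall i, ~~ odd (size (s i))) &
        (forall i j x, i != j -> x \in s i -> x \in s j -> x = b)].

Definition connected_in (W : finType) (e : rel W) (B : {set W}) : Prop :=
  forall x y, x \in B -> y \in B ->
    connect (fun u v => [&& e u v, u \in B & v \in B]) x y.

Definition has_K4_minor (W : finType) (e : rel W) : Prop :=
  exists B : 'I_4 -> {set W},
    [/\ (forall i, B i != set0),
        (forall i j, i != j -> [disjoint B i & B j]),
        (forall i, connected_in e (B i)) &
        (forall i j, i != j -> exists u v, [/\ u \in B i, v \in B j & e u v])].

From mathcomp Require Import all_boot zify.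
Set Implicit Arguments. Unset Strict Implicit. Unset Printing Implicit Defensive.

(* Let T be a line trigraph whose full realization is L(H), H bipartite.
   Both claims reduce to one combinatorial fact: if H contains an even theta
   then T contains an odd prism.

   If the theta has paths P_1, P_2, P_3 from a to
     b, each with an even number >= 2 of edges, then the vertices of T
     representing the edges of P_i form an induced path with an odd number
     of edges; the three edges at a form a triangle, as do the three edges at
     b, and no other pairs of these edges meet (Section LineGraphOfTheta).
   - K4 minor => even theta (for bipartite H).  In three of the four branch
     sets choose a tripod reaching the other branch sets; two of the three
     centres have the same colour, and joining their tripods directly and
     through the two remaining branch sets gives three internally disjoint
     paths between them, all even by bipartiteness (Sections Linked to K4). *)

Section Linked.
Variables (W : finType) (e : rel W).
Implicit Types (U : {set W}) (x y z : W) (p : seq W).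

Definition induced U : rel W := fun u v => [&& e u v, u \in U & v \in U].

Definition linked U x y : bool := connect (induced U) x y.

Lemma linked_mono U U' x y : U \subset U' -> linked U x y -> linked U' x y.
Proof.
move=> sUU'; apply: connect_sub => u v /and3P[euv uU vU]; apply: connect1.
by rewrite /induced euv !(subsetP sUU').
Qed.

Lemma linked_edge U x y : e x y -> x \in U -> y \in U -> linked U x y.
Proof. by move=> exy xU yU; apply: connect1; rewrite /induced exy xU yU. Qed.

Lemma induced_path_sub U x p : path (induced U) x p -> {subset p <= U}.
Proof.
elim: p x => //= y p IH x /andP[/and3P[_ _ yU] pth] z.
by rewrite inE => /orP[/eqP->|/(IH y pth z)].
Qed.

Lemma linked_mem U x y : linked U x y -> x \in U -> y \in U.
Proof.
by case/connectP=> [[|z p] pth ->] // _; apply: induced_path_sub pth _ (mem_last _ _).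
Qed.

Lemma linked_trans U U' x y z :
  linked U x y -> linked U' y z -> linked (U :|: U') x z.
Proof.
move=> lxy lyz; apply: connect_trans (linked_mono (subsetUl U U') lxy) _.
exact: linked_mono (subsetUr U U') lyz.
Qed.

Lemma linked_sym U x y : symmetric e -> linked U x y = linked U y x.
Proof.
move=> se; apply: sym_connect_sym => u v.
by rewrite /induced se; case: (e v u) (u \in U) (v \in U) => [] [] [].
Qed.

Lemma path_linked x p : path e x p -> linked (x |: [set y in p]) x (last x p).
Proof.
elim: p x => [|y p IH] x /=; first by move=> _; apply: connect0.
case/andP=> exy pth.
have lxy : linked [set x; y] x y by apply: linked_edge; rewrite ?inE ?eqxx ?orbT.
apply: linked_mono (linked_trans lxy (IH y pth)).
by apply/subsetP=> z; rewrite !inE; case/orP=> [/orP[]|/orP[]] ->; rewrite ?orbT.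
Qed.

Lemma linked_path U x y : linked U x y ->
  exists p, [/\ path e x p, last x p = y, uniq (x :: p) & {subset p <= U}].
Proof.
case/connectP=> q pq ->{y}; case: (shortenP pq) => p pp up sub.
exists p; split=> //; first by apply: sub_path pp => u v /and3P[].
by move=> z /sub /(induced_path_sub pq).
Qed.

End Linked.

Section EvenTheta.
Variables (W : finType) (e : rel W).

Definition proper_colouring (col : W -> bool) : Prop :=
  forall u v, e u v -> col u != col v.

Lemma path_parity col x p : proper_colouring col -> path e x p ->
  col (last x p) = col x (+) odd (size p).
Proof.
move=> pc; elim: p x => [|y p IH] x /=; first by rewrite addbF.
case/andP=> /pc cxy /IH ->; move: cxy.
by case: (col x); case: (col y); case: (odd (size p)).
Qed.

(* Three internally disjoint links between two distinct vertices of the same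
   colour give an even theta: in a bipartite graph each of the three simple
   paths extracted from the links has an even number of edges. *)
Lemma even_theta_of_links col a b (S : 'I_3 -> {set W}) :
  proper_colouring col -> a != b -> col a = col b ->
  (forall i j, i != j -> [disjoint S i & S j]) ->
  (forall i, linked e (a |: (b |: S i)) a b) -> has_even_theta_subgraph e.
Proof.
move=> pc ab cab disS lab.
have [s hs] := fin_all_exists (fun i => linked_path (lab i)).
exists a, b, s; split=> // [i | i | i j x ij xi xj].
- by have [ps ls us _] := hs i.
- have [ps ls _ _] := hs i; have := path_parity pc ps.
  by rewrite ls cab; case: (odd _); case: (col b).
- have [_ _ ui si] := hs i; have [_ _ _ sj] := hs j.
  have xa : x != a by apply: contraNneq (proj1 (andP ui)) => <-.
  apply/eqP; apply: contraTT (disS i j ij) => xb.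
  rewrite -setI_eq0; apply/set0Pn; exists x.
  by move: (si x xi) (sj x xj); rewrite !inE (negPf xa) (negPf xb) => /= -> ->.
Qed.

End EvenTheta.

Definition o0 : 'I_3 := @Ordinal 3 0 isT.
Definition o1 : 'I_3 := @Ordinal 3 1 isT.
Definition o2 : 'I_3 := @Ordinal 3 2 isT.

Lemma ord3P (m : 'I_3) : [\/ m = o0, m = o1 | m = o2].
Proof.
by case: m => [[|[|[|//]]] lt_m3]; [constructor 1 | constructor 2 | constructor 3];
  apply: val_inj.
Qed.

Definition triple (T : Type) (x y z : T) (m : 'I_3) : T := nth z [:: x; y] m.

Lemma triple_in (T : eqType) (A : {pred T}) x y z :
  x \in A -> y \in A -> z \in A -> forall m, triple x y z m \in A.
Proof. by move=> xA yA zA m; case: (ord3P m) => ->. Qed.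

Lemma split_first (T : eqType) (P : pred T) (s : seq T) : has P s ->
  exists l c r, [/\ s = l ++ c :: r, P c & ~~ has P l].
Proof. by case/split_find=> c l r Pc nPl; exists l, c, r; rewrite cat_rcons. Qed.

Section Tripod.
Variables (W : finType) (e : rel W).
Hypothesis sym_e : symmetric e.

Lemma path_split_linked x s l c r : path e x s -> x :: s = l ++ c :: r ->
  linked e (c |: [set y in l]) c x /\ linked e (c |: [set y in r]) c (last x s).
Proof.
case: l => [|y l] /= pth [<- def_s]; subst s; first by split; [apply: connect0 | apply: path_linked].
move: pth; rewrite -cat_rcons cat_path last_rcons => /andP[pl pr].
rewrite last_cat last_rcons; split; last exact: path_linked.
rewrite linked_sym //; have := path_linked pl; rewrite last_rcons; apply: linked_mono.
by apply/subsetP=> z; rewrite !inE mem_rcons inE; case/orP=> [->|/orP[]->]; rewrite ?orbT.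
Qed.

Definition tripod (B : {set W}) (c : W) (R : 'I_3 -> {set W}) (t : 'I_3 -> W) : Prop :=
  [/\ c \in B, forall m, R m \subset B,
      forall m n, m != n -> [disjoint R m & R n] &
      forall m, linked e (c |: R m) c (t m)].

Lemma tripod_perm B c R t (sg : 'I_3 -> 'I_3) : injective sg ->
  tripod B c R t -> tripod B c (R \o sg) (t \o sg).
Proof.
move=> inj_sg [cB sRB disR lR]; split=> // [m | m n mn | m].
- exact: sRB.
- by apply: disR; apply: contra mn => /eqP/inj_sg ->.
- exact: lR.
Qed.

Lemma disjoint_seq_sets (l r : seq W) : ~~ has (mem l) r ->
  [disjoint [set y in l] & [set y in r]].
Proof.
move=> nlr; rewrite -setI_eq0; apply/eqP/setP=> y; rewrite !inE.
by apply/andP=> -[yl yr]; case/hasP: nlr; exists y.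
Qed.

(* Any three vertices of a connected set are the terminals of a tripod: take
   a simple path P from t0 to t1, a path Q from t2 to t0, and let c be the
   first vertex of Q on P; the arms are the two pieces of P and the part of
   Q before c. *)
Lemma tripod_exists B t : connected_in e B -> (forall m, t m \in B) ->
  exists c R, tripod B c R t.
Proof.
move=> conB tB.
have [p [pp lp up pB]] := linked_path (conB _ _ (tB o0) (tB o1)).
have [q [pq lq _ qB]] := linked_path (conB _ _ (tB o2) (tB o0)).
have PB : {subset t o0 :: p <= B} by move=> y; rewrite inE => /orP[/eqP->|/pB].
have QB : {subset t o2 :: q <= B} by move=> y; rewrite inE => /orP[/eqP->|/qB].
have hasQ : has (mem (t o0 :: p)) (t o2 :: q).
  by apply/hasP; exists (t o0); [rewrite -[X in X \in _]lq mem_last | apply: mem_head].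
have [Q1 [c [Q2 [defQ cP nQ1]]]] := split_first hasQ.
have has_c : has (pred1 c) (t o0 :: p) by rewrite has_pred1.
have [P1 [c' [P2 [defP /eqP eq_c' _]]]] := split_first has_c; subst c'.
have [l0 l1] := path_split_linked pp defP; have [l2 _] := path_split_linked pq defQ.
rewrite lp in l1.
move: up; rewrite defP cat_uniq /= => /and3P[_ /norP[_ nP12] _].
exists c, (triple [set y in P1] [set y in P2] [set y in Q1]); split.
- exact: PB cP.
- move=> m; apply/subsetP=> y; case: (ord3P m) => -> /=; rewrite inE => yR;
    [apply: PB | apply: PB | apply: QB]; rewrite ?defP ?defQ mem_cat ?yR //.
  by rewrite inE yR !orbT.
- have d01 := disjoint_seq_sets nP12.
  have d2 : forall l : seq W, {subset l <= t o0 :: p} -> [disjoint [set y in Q1] & [set y in l]].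
    move=> l sl; apply: disjoint_seq_sets; apply: contra nQ1 => /hasP[y yl yQ1].
    by apply/hasP; exists y => //; apply: sl.
  have d20 : [disjoint [set y in Q1] & [set y in P1]].
    by apply: d2 => y yl; rewrite defP mem_cat yl.
  have d21 : [disjoint [set y in Q1] & [set y in P2]].
    by apply: d2 => y yl; rewrite defP mem_cat inE yl !orbT.
  move=> m n; case: (ord3P m) => ->; case: (ord3P n) => -> //= _;
    by rewrite ?d01 ?d20 ?d21 // disjoint_sym ?d01 ?d20 ?d21.
- by move=> m; case: (ord3P m) => ->.
Qed.

End Tripod.

Section K4.
Variables (W : finType) (e : rel W).
Hypothesis sym_e : symmetric e.
Variable col : W -> bool.
Hypothesis col_proper : proper_colouring e col.

Lemma linked_route a b u v (A M C : {set W}) :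
  linked e (a |: A) a u -> linked e (b |: C) b v -> linked e (u |: (v |: M)) u v ->
  linked e (a |: (b |: (A :|: M :|: C))) a b.
Proof.
move=> lau lbv luv; have uA := linked_mem lau (setU11 a A).
have vC := linked_mem lbv (setU11 b C); rewrite linked_sym // in lbv.
apply: linked_mono (linked_trans (linked_trans lau luv) lbv).
apply/subsetP=> x; rewrite !inE => /orP[/orP[/orP[/eqP-> | xA] | /orP[/eqP-> | /orP[/eqP-> | xM]]] |
  /orP[/eqP-> | xC]]; rewrite ?eqxx ?xA ?xM ?xC ?orbT //.
- by move: uA; rewrite !inE => /orP[->|->]; rewrite ?orbT.
- by move: vC; rewrite !inE => /orP[->|->]; rewrite ?orbT.
Qed.

Lemma linked_bridge u v u' v' (M : {set W}) : e u u' -> e v' v ->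
  linked e M u' v' -> u' \in M -> linked e (u |: (v |: M)) u v.
Proof.
move=> euu' ev'v lM u'M; have v'M := linked_mem lM u'M.
have sM : M \subset u |: (v |: M) by apply/subsetP=> x xM; rewrite !inE xM !orbT.
apply: connect_trans (linked_edge euu' (setU11 u _) (subsetP sM _ u'M)) _.
apply: connect_trans (linked_mono sM lM) (connect1 _).
by rewrite /induced ev'v (subsetP sM _ v'M) !inE eqxx orbT.
Qed.

Lemma theta_of_tripods (B : 'I_4 -> {set W}) i j k l ci cj Ri Rj ti tj u1 v1 u2 v2 :
  (forall p q, p != q -> [disjoint B p & B q]) ->
  i != j -> i != k -> i != l -> j != k -> j != l -> k != l ->
  connected_in e (B k) -> connected_in e (B l) ->
  tripod e (B i) ci Ri ti -> tripod e (B j) cj Rj tj -> col ci = col cj ->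
  e (ti o0) (tj o0) ->
  e (ti o1) u1 -> e v1 (tj o1) -> u1 \in B k -> v1 \in B k ->
  e (ti o2) u2 -> e v2 (tj o2) -> u2 \in B l -> v2 \in B l ->
  has_even_theta_subgraph e.
Proof.
move=> disB ij ik il jk jl kl conk conl [ciB sRi disRi lRi] [cjB sRj disRj lRj]
  cij e0 e1 e1' u1k v1k e2 e2' u2l v2l.
have out p q x : p != q -> x \in B p -> x \in B q -> False.
  by move=> pq xp xq; move: (disjointFr (disB p q pq) xp); rewrite xq.
pose M := triple set0 (B k) (B l).
have inRi m x : x \in Ri m -> x \in B i by apply: (subsetP (sRi m)).
have inRj m x : x \in Rj m -> x \in B j by apply: (subsetP (sRj m)).
have outMi m x : x \in M m -> x \in B i -> False.
  by case: (ord3P m) => -> /=; rewrite ?inE // => /out; apply; rewrite eq_sym.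
have outMj m x : x \in M m -> x \in B j -> False.
  by case: (ord3P m) => -> /=; rewrite ?inE // => /out; apply; rewrite eq_sym.
apply: (@even_theta_of_links _ _ col ci cj (fun m => Ri m :|: M m :|: Rj m)) => //.
- by apply: contraTneq cjB => <-; rewrite (disjointFr (disB i j ij) ciB).
- move=> m n mn; rewrite -setI_eq0; apply/eqP/setP=> x; rewrite !inE; apply/negP.
  case/andP=> /orP[/orP[xm|xm]|xm] /orP[/orP[xn|xn]|xn].
  + by move: (disjointFr (disRi m n mn) xm); rewrite xn.
  + exact: outMi xn (inRi _ _ xm).
  + exact: out ij (inRi _ _ xm) (inRj _ _ xn).
  + exact: outMi xm (inRi _ _ xn).
  + move: mn xm xn; case: (ord3P m) => ->; case: (ord3P n) => -> //= _; rewrite ?inE //.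
    * by move=> xk xl; apply: out kl xk xl.
    * by move=> xl xk; apply: out kl xk xl.
  + exact: outMj xm (inRj _ _ xn).
  + exact: out ij (inRi _ _ xn) (inRj _ _ xm).
  + exact: outMj xn (inRj _ _ xm).
  + by move: (disjointFr (disRj m n mn) xm); rewrite xn.
- move=> m; apply: (linked_route (lRi m) (lRj m)).
  case: (ord3P m) => -> /=.
  + by apply: linked_edge; rewrite ?inE ?eqxx ?orbT.
  + exact: linked_bridge e1 e1' (conk _ _ u1k v1k) u1k.
  + exact: linked_bridge e2 e2' (conl _ _ u2l v2l) u2l.
Qed.

Definition p0 : 'I_4 := @Ordinal 4 0 isT.
Definition p1 : 'I_4 := @Ordinal 4 1 isT.
Definition p2 : 'I_4 := @Ordinal 4 2 isT.
Definition p3 : 'I_4 := @Ordinal 4 3 isT.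

Definition swap01 (m : 'I_3) : 'I_3 := triple o1 o0 o2 m.

Lemma swap01_inj : injective swap01.
Proof. by move=> m n; case: (ord3P m) => ->; case: (ord3P n) => ->. Qed.

(* A K4 minor in a bipartite graph yields an even theta: build tripods in
   three branch sets towards the other branch sets; two of the three centres
   have the same colour, and their tripods join through the remaining two
   branch sets. *)
Lemma even_theta_of_K4_minor : has_K4_minor e -> has_even_theta_subgraph e.
Proof.
case=> B [_ disB conB adjB].
have [x01 [x10 [h01 h10 e01]]] := adjB p0 p1 isT.
have [x02 [x20 [h02 h20 e02]]] := adjB p0 p2 isT.
have [x03 [x30 [h03 h30 e03]]] := adjB p0 p3 isT.
have [x12 [x21 [h12 h21 e12]]] := adjB p1 p2 isT.
have [x13 [x31 [h13 h31 e13]]] := adjB p1 p3 isT.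
have [x23 [x32 [h23 h32 e23]]] := adjB p2 p3 isT.
have [c0 [R0 T0]] := tripod_exists sym_e (conB p0) (triple_in h01 h02 h03).
have [c1 [R1 T1]] := tripod_exists sym_e (conB p1) (triple_in h10 h12 h13).
have [c2 [R2 T2]] := tripod_exists sym_e (conB p2) (triple_in h20 h21 h23).
case E01: (col c0 == col c1).
  apply: (theta_of_tripods (u1 := x20) (v1 := x21) (u2 := x30) (v2 := x31) disB
    _ _ _ _ _ _ (conB p2) (conB p3) T0 T1 (eqP E01)) => //; by rewrite sym_e.
case E02: (col c0 == col c2).
  apply: (theta_of_tripods (u1 := x10) (v1 := x12) (u2 := x30) (v2 := x32) disB
    _ _ _ _ _ _ (conB p1) (conB p3) (tripod_perm swap01_inj T0) T2 (eqP E02)) => //.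
  by rewrite sym_e.
have E12 : col c1 = col c2.
  by move: E01 E02; case: (col c0); case: (col c1); case: (col c2).
apply: (theta_of_tripods (u1 := x01) (v1 := x02) (u2 := x31) (v2 := x32) disB
  _ _ _ _ _ _ (conB p0) (conB p3) (tripod_perm swap01_inj T1) (tripod_perm swap01_inj T2)
  E12) => //; by rewrite sym_e.
Qed.

End K4.

Lemma last_iota m n : last m (iota m.+1 n) = m + n.
Proof. by elim: n m => [|n IH] m /=; rewrite ?addn0 // IH addSnnS. Qed.

Lemma consec_map_iota (T : eqType) (g : nat -> T) n x y :
  consec (map g (iota 0 n)) x y <->
  exists k, k.+1 < n /\ ((g k = x /\ g k.+1 = y) \/ (g k = y /\ g k.+1 = x)).
Proof.
have nthg k : k < n -> nth x (map g (iota 0 n)) k = g k.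
  by move=> kn; rewrite (nth_map 0) ?size_iota // nth_iota.
rewrite /consec size_map size_iota.
by split=> -[k [kn hk]]; exists k; rewrite !nthg in hk *; try lia.
Qed.

Section LineGraphOfTheta.
Variables (W : finType) (e : rel W) (a b : W) (s : 'I_3 -> seq W).
Hypothesis ab : a != b.
Hypothesis s_path : forall i, path e a (s i) /\ last a (s i) = b /\ uniq (a :: s i).
Hypothesis s_even : forall i, ~~ odd (size (s i)).
Hypothesis s_disjoint : forall i j x, i != j -> x \in s i -> x \in s j -> x = b.

Definition len i := size (s i).
Definition vtx i m := nth a (a :: s i) m.
Definition edge i m := [set vtx i m; vtx i m.+1].

Lemma len_gt1 i : 1 < len i.
Proof.
have [_ [ls _]] := s_path i; move: (s_even i) ls; rewrite /len.
by case: (s i) => [|x [|y t]] //= _ xb; move: ab; rewrite xb eqxx.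
Qed.

Lemma len_pos i : 0 < len i.
Proof. exact: ltnW (len_gt1 i). Qed.

Lemma len_pred_lt i : (len i).-1 < len i.
Proof. by rewrite ltn_predL len_pos. Qed.

Lemma vtx_last i : vtx i (len i) = b.
Proof. by have [_ [ls _]] := s_path i; rewrite /vtx /len -ls (nth_last a (a :: s i)). Qed.

Lemma vtx_inj i m m' : m <= len i -> m' <= len i -> vtx i m = vtx i m' -> m = m'.
Proof.
have [_ [_ us]] := s_path i; move=> lm lm' /eqP.
by rewrite nth_uniq // => /eqP.
Qed.

Lemma vtx_eq_diff i j m m' : i != j -> m <= len i -> m' <= len j ->
  vtx i m = vtx j m' -> (m = 0 /\ m' = 0) \/ (m = len i /\ m' = len j).
Proof.
move=> ij lm lm' E; have mi : vtx i m \in a :: s i by rewrite mem_nth /= ?ltnS.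
have mj : vtx j m' \in a :: s j by rewrite mem_nth /= ?ltnS.
have a_notin k : a \notin s k by have [_ [_ /andP[]]] := s_path k.
move: mi mj; rewrite -E !inE => /orP[/eqP va|vi] /orP[/eqP va'|vj].
- by left; split; [apply: (@vtx_inj i) | apply: (@vtx_inj j)]; rewrite // ?va -?E.
- by move: (a_notin j); rewrite -va vj.
- by move: (a_notin i); rewrite -va' vi.
- have vb := s_disjoint ij vi vj.
  by right; split; [apply: (@vtx_inj i) | apply: (@vtx_inj j)];
    rewrite // vtx_last // -?E.
Qed.

Lemma edge_in i m : m < len i -> edge i m \in edge_set e.
Proof.
move=> lm; have [ps _] := s_path i; rewrite inE; apply/existsP; exists (vtx i m).
by apply/existsP; exists (vtx i m.+1); rewrite (pathP a ps m lm) eqxx.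
Qed.

Lemma edge_mem w i m : w \in edge i m -> exists2 d, d <= 1 & w = vtx i (m + d).
Proof. by case/set2P=> ->; [exists 0; rewrite ?addn0 | exists 1; rewrite ?addn1]. Qed.

Lemma edge_meet i j m m' : m < len i -> m' < len j -> (i != j) || (m != m') ->
  edge i m :&: edge j m' != set0 <->
  [\/ i = j /\ (m' = m.+1 \/ m = m'.+1), m = 0 /\ m' = 0 | m.+1 = len i /\ m'.+1 = len j].
Proof.
move=> lm lm' neq; have li := len_gt1 i; have lj := len_gt1 j; split.
  case/set0Pn=> w; rewrite inE => /andP[/edge_mem[d d1 ->] /edge_mem[d' d1' E]].
  case: (eqVneq i j) lm' neq E => [<- lm' /= mm' | ij lm' _] E.
    have {}E : m + d = m' + d' by apply: (vtx_inj _ _ E); lia.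
    by constructor 1; split=> //; move: mm'; lia.
  have : (m + d = 0 /\ m' + d' = 0) \/ (m + d = len i /\ m' + d' = len j).
    by apply: (vtx_eq_diff ij _ _ E); lia.
  by case=> -[? ?]; [constructor 2 | constructor 3]; lia.
case=> [[<- [->|->]] | [-> ->] | [lmi lmj]]; apply/set0Pn.
- by exists (vtx i m.+1); rewrite !inE !eqxx ?orbT.
- by exists (vtx i m'.+1); rewrite !inE !eqxx ?orbT.
- by exists a; rewrite !inE !eqxx.
- have bi : vtx i m.+1 = b by rewrite lmi vtx_last.
  have bj : vtx j m'.+1 = b by rewrite lmj vtx_last.
  by exists b; rewrite !inE; apply/andP; split; apply/orP; right; rewrite ?bi ?bj.
Qed.

Section Prism.
Variables (V : finType) (th : V -> V -> trival) (f : V -> {set W}).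
Hypothesis f_adj : forall u v, u != v -> (full_realization th u v <-> f u :&: f v != set0).

(* h i m is the vertex of the trigraph representing the m-th edge of path i;
   the prism paths are h i 0, ..., h i (len i - 1). *)
Variable h : 'I_3 -> nat -> V.
Hypothesis f_h : forall i m, m < len i -> f (h i m) = edge i m.

Definition prism_tail i := map (h i) (iota 1 (len i).-1).

Lemma prism_seq i : h i 0 :: prism_tail i = map (h i) (iota 0 (len i)).
Proof. by have := len_gt1 i; rewrite /prism_tail; case: (len i). Qed.

Lemma prism_last i : last (h i 0) (prism_tail i) = h i (len i).-1.
Proof. by rewrite /prism_tail last_map last_iota. Qed.

Lemma prism_mem i x : x \in h i 0 :: prism_tail i -> exists2 m, m < len i & x = h i m.
Proof.
by rewrite prism_seq => /mapP[m]; rewrite mem_iota add0n => /andP[_ lm] ->; exists m.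
Qed.

Lemma h_inj i j m m' : m < len i -> m' < len j -> h i m = h j m' -> i = j /\ m = m'.
Proof.
move=> lm lm' E; have := len_gt1 i; have := len_gt1 j.
have Eij : edge i m = edge j m' by rewrite -!f_h // E.
have /edge_mem[d d1 E1] : vtx i m \in edge j m' by rewrite -Eij set21.
have /edge_mem[d' d1' E2] : vtx i m.+1 \in edge j m' by rewrite -Eij set22.
case: (eqVneq i j) lm' E1 E2 => [<- | ij] lm' E1 E2 li lj.
  have e1 : m = m' + d by apply: (vtx_inj _ _ E1); lia.
  have e2 : m.+1 = m' + d' by apply: (vtx_inj _ _ E2); lia.
  by split=> //; lia.
have c1 : (m = 0 /\ m' + d = 0) \/ (m = len i /\ m' + d = len j).
  by apply: (vtx_eq_diff ij _ _ E1); lia.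
have c2 : (m.+1 = 0 /\ m' + d' = 0) \/ (m.+1 = len i /\ m' + d' = len j).
  by apply: (vtx_eq_diff ij _ _ E2); lia.
lia.
Qed.

Lemma prism_adjacent i j m m' : m < len i -> m' < len j ->
  [\/ i = j /\ (m' = m.+1 \/ m = m'.+1), m = 0 /\ m' = 0 | m.+1 = len i /\ m'.+1 = len j]
  <-> (exists k, consec (h k 0 :: prism_tail k) (h i m) (h j m'))
      \/ (exists k l, h i m = h k 0 /\ h j m' = h l 0)
      \/ (exists k l, h i m = last (h k 0) (prism_tail k)
                     /\ h j m' = last (h l 0) (prism_tail l)).
Proof.
move=> lm lm'; have := len_gt1 i; have := len_gt1 j => lj li.
split=> [[[ij [m'm | mm']] | [-> ->] | [mi mj]] | ].
- subst j m'; left; exists i; rewrite prism_seq consec_map_iota.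
  by exists m; split; [lia | left].
- subst j m; left; exists i; rewrite prism_seq consec_map_iota.
  by exists m'; split; [lia | right].
- by right; left; exists i, j.
- by right; right; exists i, j; rewrite !prism_last -mi -mj.
case=> [[k] | [[k [l [/h_inj Ei /h_inj Ej]]] | [k [l]]]].
- rewrite prism_seq consec_map_iota => -[n [ln [[/h_inj E1 /h_inj E2] | [/h_inj E1 /h_inj E2]]]].
  + have [<- <-] := E1 ltac:(lia) lm; have [<- <-] := E2 ln lm'; by constructor 1; split=> //; lia.
  + have [<- <-] := E1 ltac:(lia) lm'; have [<- <-] := E2 ln lm; by constructor 1; split=> //; lia.
- have [_ ->] := Ei lm (len_pos k); have [_ ->] := Ej lm' (len_pos l); by constructor 2.
- rewrite !prism_last => -[/h_inj Ei /h_inj Ej].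
  have [<- mk] := Ei lm (len_pred_lt k); have [<- mj] := Ej lm' (len_pred_lt l).
  by constructor 3; lia.
Qed.

(* The representatives of the three paths of the theta form an odd prism:
   each path of the theta has an even number >= 2 of edges, so each prism
   path has an odd number of edges. *)
Lemma odd_prism_of_representation : has_odd_prism th.
Proof.
exists (fun i => h i 0), prism_tail; cbv beta zeta; split.
- move=> i; rewrite prism_seq map_inj_in_uniq ?iota_uniq // => m m'.
  rewrite !mem_iota !add0n => /andP[_ lm] /andP[_ lm'] /h_inj E.
  by have [_ ->] := E lm lm'.
- move=> i; rewrite size_map size_iota; have := s_even i; have := len_gt1 i.
  by rewrite /len; case: (size (s i)) => [|n] //= _; rewrite negbK.
- move=> i j x ij /prism_mem[m lm ->]; apply/negP=> /prism_mem[m' lm' /h_inj E].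
  by have [ij' _] := E lm lm'; rewrite ij' eqxx in ij.
move=> x y i j /prism_mem[m lm ->] /prism_mem[m' lm' ->] xy.
have neq : (i != j) || (m != m').
  by apply: contraNT xy; case/norP=> /negbNE/eqP-> /negbNE/eqP->.
apply: iff_trans (f_adj xy) _; rewrite !f_h //.
exact: iff_trans (edge_meet lm lm' neq) (prism_adjacent lm lm').
Qed.

End Prism.

Lemma odd_prism_of_line_graph (V : finType) (th : V -> V -> trival) (f : V -> {set W}) :
  (forall X, X \in edge_set e -> exists v, f v = X) ->
  (forall u v, u != v -> (full_realization th u v <-> f u :&: f v != set0)) ->
  has_odd_prism th.
Proof.
move=> f_surj f_adj; have [v0 _] := f_surj _ (edge_in (len_pos o0)).
pose h i m := odflt v0 [pick v | f v == edge i m].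
apply: (odd_prism_of_representation f_adj (h := h)) => i m lm.
rewrite /h; case: pickP => [v /eqP // | none].
by have [v fv] := f_surj _ (edge_in lm); move: (none v); rewrite fv eqxx.
Qed.

End LineGraphOfTheta.

Lemma odd_prism_of_even_theta (V W : finType) (th : V -> V -> trival) (e : rel W) :
  is_line_graph_of (full_realization th) e -> has_even_theta_subgraph e ->
  has_odd_prism th.
Proof.
case=> f [_ _ f_surj f_adj] [a [b [s [ab s_path s_even s_disj]]]].
exact: (odd_prism_of_line_graph ab s_path s_even s_disj f_surj f_adj).
Qed.

Theorem proposition4p4 (V : finType) (th : V -> V -> trival)
  (W : finType) (e : rel W) :
  is_trigraph th -> line_trigraph th -> ~ has_odd_prism th ->
  simple_graph e -> bipartite e ->
  is_line_graph_of (full_realization th) e ->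
  ~ has_even_theta_subgraph e /\ ~ has_K4_minor e.
Proof.
move=> _ _ no_prism [sym_e _] [col col_proper] line_graph.
have no_theta : ~ has_even_theta_subgraph e.
  by move/(odd_prism_of_even_theta line_graph).
by split=> // /(even_theta_of_K4_minor sym_e col_proper).
Qed.
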